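(* Let $D$ be a finite-dimensional division algebra over $\mathbb Q$ and $n\in\mathbb Z_{>0}$. Let $\Sigma$ be a non-trivial finitely generated abelian subgroup of ${\rm GL}_n(D)$ consisting of unipotent matrices, so that each $\alpha\in\Sigma$ is $\alpha=1+\eta_\alpha$ with $\eta_\alpha\in M_n(D)$ nilpotent. Let $\mathfrak k=\bigcap_{\alpha\in\Sigma}\ker\eta_\alpha\subseteq D^n$ and $k=\dim_D\mathfrak k$ (as a right $D$-vector space). Then ${\rm rk}_{\mathbb Z}\Sigma<n\cdot(n-k)\cdot[D:\mathbb Q]$.
   Context: $D^n$ is regarded as an $M_n(D)$–$D$-bimodule; dimensions over $D$ are of right $D$-vector spaces. ${\rm rk}_{\mathbb Z}$ is the torsion-free rank of an abelian group. *)

From HB Require Import structures.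
From mathcomp Require Import all_boot all_order all_algebra all_field.
Set Implicit Arguments. Unset Strict Implicit. Unset Printing Implicit Defensive.
Import GRing.Theory.
Local Open Scope ring_scope.

Definition is_division_algebra (D : falgType rat) : Prop :=
  forall x : D, x != 0 -> x \is a GRing.unit.

Definition dimQ (D : falgType rat) : nat := \dim (fullv : {vspace D}).

Section Defs.
Variables (D : falgType rat) (n : nat).
Local Notation M := 'M[D]_n.

Definition nilpotent_mx (eta : M) : Prop := exists m : nat, eta ^+ m = 0.

Definition unipotent (alpha : M) : Prop := nilpotent_mx (alpha - 1).

Definition invertible_mx (alpha : M) : Prop :=
  exists beta : M, alpha * beta = 1 /\ beta * alpha = 1.

Definition is_subgroup_GL (S : M -> Prop) : Prop :=
  [/\ S 1,
      forall a b, S a -> S b -> S (a * b)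
    & forall a, S a -> exists2 b, S b & a * b = 1 /\ b * a = 1].

Definition is_abelian (S : M -> Prop) : Prop :=
  forall a b, S a -> S b -> a * b = b * a.

(* In an abelian group: S is generated by the finite family g, i.e. every
   element is prod g_i^(a_i) * (prod g_i^(b_i))^-1 for naturals a_i, b_i. *)
Definition fin_generated (S : M -> Prop) : Prop :=
  exists r : nat, exists g : 'I_r -> M, (forall i, S (g i)) /\
    forall x, S x -> exists a b : 'I_r -> nat,
      x * \prod_(i < r) (g i) ^+ b i = \prod_(i < r) (g i) ^+ a i.

(* Z-linear (multiplicative) independence of a family in an abelian group:
   prod g_i^(e_i) = 1 with e_i in Z forces e = 0; written with e = a - b. *)
Definition Z_independent (r : nat) (g : 'I_r -> M) : Prop :=
  forall a b : 'I_r -> nat,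
    \prod_(i < r) (g i) ^+ a i = \prod_(i < r) (g i) ^+ b i ->
    forall i, a i = b i.

(* rk_Z S = r : the torsion-free rank, i.e. the maximal size of a
   Z-independent family of elements of S. *)
Definition rkZ_eq (S : M -> Prop) (r : nat) : Prop :=
  (exists g : 'I_r -> M, (forall i, S (g i)) /\ Z_independent g) /\
  (forall (s : nat) (g : 'I_s -> M), (forall i, S (g i)) -> Z_independent g ->
     (s <= r)%N).

(* kfrak = intersection over alpha in S of ker (alpha - 1) in D^n
   (column vectors, M_n(D) acting on the left, D on the right). *)
Definition in_kfrak (S : M -> Prop) (v : 'cV[D]_n) : Prop :=
  forall alpha, S alpha -> (alpha - 1) *m v = 0.

(* dim_D kfrak = k : the columns of B : 'M_(n,k) form a basis of kfrak as a
   right D-vector space (right D-linearly independent and spanning). *)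
Definition rdimD_eq (S : M -> Prop) (k : nat) : Prop :=
  exists B : 'M[D]_(n, k),
    [/\ forall j : 'I_k, in_kfrak S (col j B),
        forall c : 'cV[D]_k, B *m c = 0 -> c = 0
      & forall v, in_kfrak S v -> exists c : 'cV[D]_k, v = B *m c].

End Defs.

(* Taking logarithms linearises the problem.  Every unipotent [g = 1 + eta] is
   the truncated exponential of a nilpotent [z = u * eta] that is a polynomial
   in [eta] without constant term; [z] is found by a Newton-type iteration.  On
   commuting nilpotents the exponential turns sums into products, so after
   clearing denominators a rational relation between the logarithms [z_i] of
   [r] independent elements of Sigma would be an integral relation between the
   elements themselves: the [z_i] are linearly independent over Q.  If the
   columns of [B] form a basis of the fixed space and [C * B = 1], then every
   [z_i] and the idempotent [Y = 1 - B * C] satisfy [X * B = 0]; [Y] is not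
   nilpotent, so it is not in the span of the commuting nilpotents [z_i].
   Since [X |-> X * B] maps [M_n(D)] onto [M_(n,k)(D)], its kernel has rational
   dimension [n * (n - k) * [D : Q]] and contains [r + 1] independent
   matrices. *)

From HB Require Import structures.
From mathcomp Require Import all_boot all_order all_algebra all_field.
From mathcomp Require Import ring zify.
Set Implicit Arguments. Unset Strict Implicit. Unset Printing Implicit Defensive.
Import GRing.Theory Num.Theory.
Local Open Scope ring_scope.

Lemma size_index_enum_ord r : size (index_enum 'I_r) = r.
Proof. by rewrite /index_enum unlock -enumT -cardT card_ord. Qed.

Section Nilpotent.
Variable R : pzRingType.
Implicit Types x y : R.

Lemma expr_eq0_le x a b : x ^+ a = 0 -> (a <= b)%N -> x ^+ b = 0.
Proof. by move=> xa ab; rewrite -(subnKC ab) exprD xa mul0r. Qed.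

Lemma exprD_eq0_comm x y a b : GRing.comm x y -> x ^+ a = 0 -> y ^+ b = 0 ->
  (x + y) ^+ (a + b) = 0.
Proof.
move=> cxy xa yb; rewrite exprDn_comm // big1 // => -[i /= lt_i_ab] _.
have [lt_ib | le_bi] := ltnP i b; last by rewrite (expr_eq0_le yb le_bi) mulr0 mul0rn.
by rewrite (@expr_eq0_le x a) ?mul0r ?mul0rn //; lia.
Qed.

Lemma expr_sum_eq0_comm (I : Type) (s : seq I) (z : I -> R) m :
  (forall i j, GRing.comm (z i) (z j)) -> (forall i, z i ^+ m = 0) ->
  (\sum_(i <- s) z i) ^+ (size s * m).+1 = 0.
Proof.
move=> cz zm; elim: s => [|i s IH]; first by rewrite big_nil expr1.
rewrite big_cons mulSn -addnS exprD_eq0_comm //.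
by apply: commr_sum => j _; apply: cz.
Qed.

Lemma expr_sum_ord_eq0_comm r (z : 'I_r -> R) m :
  (forall i j, GRing.comm (z i) (z j)) -> (forall i, z i ^+ m = 0) ->
  (\sum_i z i) ^+ (r * m).+1 = 0.
Proof.
move=> cz zm; have := expr_sum_eq0_comm (index_enum 'I_r) cz zm.
by rewrite size_index_enum_ord.
Qed.

End Nilpotent.

Lemma idempotent_expr_neq0 (R : nzRingType) (y : R) K :
  y * y = y -> y != 0 -> y ^+ K != 0.
Proof.
move=> yy y_neq0; case: K => [|K]; first by rewrite expr0 oner_neq0.
suff -> : y ^+ K.+1 = y by [].
by elim: K => // K IH; rewrite exprS IH.
Qed.

Section TruncatedExp.
Variables (R : nzRingType) (f : {rmorphism rat -> R}).
Hypothesis f_central : forall c x, GRing.comm (f c) x.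

Definition expterm (j : nat) (x : R) := f (j`!%:R^-1) * x ^+ j.
Definition truncexp (N : nat) (x : R) := \sum_(j < N) expterm j x.

Lemma invfact_binomial i l : (i <= l)%N ->
  (l`!%:R^-1 : rat) *+ 'C(l, i) = (l - i)`!%:R^-1 * i`!%:R^-1.
Proof.
move=> le_il; have /(congr1 (fun k => k%:R : rat)) := bin_fact le_il.
rewrite !natrM -mulr_natr => <-.
have fact_neq0 k : (k`!%:R : rat) != 0 by rewrite pnatr_eq0 -lt0n fact_gt0.
have bin_neq0 : ('C(l, i)%:R : rat) != 0 by rewrite pnatr_eq0 -lt0n bin_gt0.
by field; rewrite !fact_neq0 bin_neq0.
Qed.

Lemma exptermD x y l : GRing.comm x y ->
  expterm l (x + y) = \sum_(i < l.+1) expterm (l - i) x * expterm i y.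
Proof.
move=> cxy; rewrite /expterm exprDn_comm // mulr_sumr.
apply: eq_bigr => -[i /=]; rewrite ltnS => le_il _.
rewrite mulrnAr -mulrnAl -rmorphMn invfact_binomial // rmorphM.
by rewrite -!mulrA; congr (_ * _); rewrite !mulrA f_central.
Qed.

Lemma coef_expterm_poly p x i : x ^+ p = 0 ->
  (\poly_(j < p) expterm j x)`_i = expterm i x.
Proof.
move=> xp; rewrite coef_poly; case: ltnP => // le_pi.
by rewrite /expterm (expr_eq0_le xp le_pi) mulr0.
Qed.

Lemma truncexp_horner p N x : x ^+ p = 0 -> (p <= N)%N ->
  truncexp N x = (\poly_(j < p) expterm j x).[1].
Proof.
move=> xp le_pN; rewrite (horner_coef_wide _ (leq_trans (size_poly _ _) le_pN)).
by apply: eq_bigr => j _; rewrite expr1n mulr1 coef_expterm_poly.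
Qed.

(* The Cauchy product of the two truncated series, evaluated at 1. *)
Lemma truncexpD p N x y : GRing.comm x y -> x ^+ p = 0 -> y ^+ p = 0 ->
  (p + p <= N)%N -> truncexp N (x + y) = truncexp N x * truncexp N y.
Proof.
move=> cxy xp yp le_2p_N; have le_pN : (p <= N)%N by lia.
rewrite (truncexp_horner xp le_pN) (truncexp_horner yp le_pN) -hornerM_comm; last first.
  by rewrite /comm_poly mul1r mulr1.
have size_le : (size (\poly_(j < p) expterm j x * \poly_(j < p) expterm j y)%R <= N)%N.
  apply: leq_trans (size_polyMleq _ _) _.
  by have := size_poly p (expterm^~ x); have := size_poly p (expterm^~ y); lia.
rewrite (horner_coef_wide _ size_le); apply: eq_bigr => l _.
rewrite expr1n mulr1 coefMr exptermD //; apply: eq_bigr => i _.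
by rewrite !coef_expterm_poly.
Qed.

Lemma truncexp0 N : (0 < N)%N -> truncexp N 0 = 1.
Proof.
case: N => // N _; rewrite /truncexp big_ord_recl big1 => [|i _]; last first.
  by rewrite /expterm expr0n mulr0.
by rewrite /expterm fact0 invr1 rmorph1 mulr1 addr0.
Qed.

Lemma truncexpMn P N z a : z ^+ P = 0 -> (0 < P)%N -> (P + P <= N)%N ->
  truncexp N (z *+ a) = truncexp N z ^+ a.
Proof.
move=> zP P_gt0 le_2P_N; elim: a => [|a IH]; first by rewrite mulr0n truncexp0 //; lia.
rewrite mulrS (truncexpD (p := P)) ?IH ?exprS //.
- exact/commrMn.
- by rewrite exprMn_n zP mul0rn.
Qed.

Lemma truncexp_sum (I : Type) (s : seq I) (z : I -> R) (a : I -> nat) m P N :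
  (forall i j, GRing.comm (z i) (z j)) -> (forall i, z i ^+ m = 0) ->
  (size s * m < P)%N -> (P + P <= N)%N ->
  truncexp N (\sum_(i <- s) z i *+ a i) = \prod_(i <- s) truncexp N (z i) ^+ a i.
Proof.
move=> cz zm; elim: s => [|i s IH] /= lt_sm_P le_2P_N.
  by rewrite !big_nil truncexp0 //; lia.
have le_mP : (m <= P)%N by move: lt_sm_P; rewrite mulSn; lia.
have czn j k : GRing.comm (z j *+ a j) (z k *+ a k).
  by apply: commrMn; apply: commr_sym; apply: commrMn; apply: commr_sym.
have zP j : (z j *+ a j) ^+ P = 0 by rewrite exprMn_n (expr_eq0_le (zm j) le_mP) mul0rn.
rewrite !big_cons (truncexpD (p := P)) //.
- by rewrite (truncexpMn (P := P)) ?(expr_eq0_le (zm i)) ?IH //; lia.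
- by apply: commr_sum => j _.
- apply: (@expr_eq0_le _ _ (size s * m).+1); last by move: lt_sm_P; rewrite mulSn; lia.
  by apply: expr_sum_eq0_comm => // j; rewrite exprMn_n zm mul0rn.
Qed.

Lemma truncexpSS N y :
  truncexp N.+2 y = 1 + y + y ^+ 2 * \sum_(i < N) f (i.+2`!%:R^-1) * y ^+ i.
Proof.
rewrite /truncexp !big_ord_recl /expterm /= fact0 invr1 rmorph1 !mul1r expr0 expr1.
rewrite addrA mulr_sumr; congr (_ + _); apply: eq_bigr => i _.
by rewrite mulrA -(f_central _ (y ^+ 2)) -mulrA -exprD add2n.
Qed.

End TruncatedExp.

Lemma truncexp_rmorph (R R' : nzRingType) (f : {rmorphism rat -> R})
  (f' : {rmorphism rat -> R'}) (g : {rmorphism R -> R'}) :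
  g \o f =1 f' -> forall N x, g (truncexp f N x) = truncexp f' N (g x).
Proof.
move=> gf N x; rewrite /truncexp rmorph_sum; apply: eq_bigr => j _.
by rewrite /expterm rmorphM rmorphXn -gf.
Qed.

Definition rat_free (R : pzRingType) (f : rat -> R) s (w : 'I_s -> R) : Prop :=
  forall c : 'I_s -> rat, \sum_i f (c i) * w i = 0 -> forall i, c i = 0.

Lemma rat_common_denom r (c : 'I_r -> rat) :
  exists2 L : rat, L != 0 &
    exists a b : 'I_r -> nat, forall i, c i * L = (a i)%:R - (b i)%:R.
Proof.
pose L := \prod_i denq (c i).
pose e i := numq (c i) * \prod_(j | j != i) denq (c j).
have eL i : (e i)%:~R = c i * L%:~R :> rat.
  by rewrite /L (bigD1 i) //= (intrM _ (denq _)) mulrA -numqE /e intrM.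
exists L%:~R; first by rewrite intr_eq0; apply/prodf_neq0 => i _; rewrite denq_neq0.
pose a i := if (0 <= e i)%R then `|e i|%N else 0%N.
pose b i := if (0 <= e i)%R then 0%N else `|e i|%N.
have eab i : e i = (a i)%:Z - (b i)%:Z by rewrite /a /b; case: ifP => e_ge0; lia.
by exists a, b => i; rewrite -eL eab intrB.
Qed.

Section UnipotentLog.
Variables (R : nzRingType) (f : {rmorphism rat -> R}).
Hypothesis f_central : forall c x, GRing.comm (f c) x.

Definition central_commr (x : R) : commr_rmorph f x := fun c => esym (f_central c x).
Local Notation hc x := (horner_morph (central_commr x)).

Lemma horner_central_comm x p q : GRing.comm (hc x p) (hc x q).
Proof. by rewrite /GRing.comm -!rmorphM mulrC. Qed.

Lemma horner_central_commr x y p : GRing.comm y x -> GRing.comm y (hc x p).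
Proof.
move=> cyx; rewrite /horner_morph horner_coef; apply: commr_sum => i _.
by apply: commrM; [rewrite coef_map; apply: commr_sym; apply: f_central | exact: commrX].
Qed.

Lemma horner_centralXr x p : hc x (p * 'X) = hc x p * x.
Proof. by rewrite rmorphM /= horner_morphX. Qed.

Lemma horner_centralXr_eq0 x m p : x ^+ m = 0 -> hc x (p * 'X) ^+ m = 0.
Proof.
move=> xm; rewrite horner_centralXr exprMn_comm ?xm ?mulr0 //.
by have := horner_central_comm x p 'X; rewrite horner_morphX.
Qed.

Lemma polyC_central c (q : {poly rat}) : GRing.comm c%:P q.
Proof. exact: mulrC. Qed.

(* Newton-type iteration: if [truncexp (p X)(x) = 1 + x + x^(j+1) q(x)], then
   replacing [p] by [p - X^j q] multiplies the left side by
   [truncexp (-x^(j+1) q(x)) = 1 - x^(j+1) q(x) + O(x^(2j+2))], which pushes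
   the error term to [x^(j+2)]. *)
Lemma truncexp_onto_unipotent x m N : x ^+ m = 0 -> (0 < m)%N -> (m + m <= N)%N ->
  exists p : {poly rat}, truncexp f N (hc x (p * 'X)) = 1 + x.
Proof.
move=> xm m_gt0; case: N => [|[|N]] le_2m_N; try lia.
have xXm p : hc x (p * 'X) ^+ m = 0 by apply: horner_centralXr_eq0.
suff approx j : exists p q : {poly rat},
    truncexp f N.+2 (hc x (p * 'X)) = hc x (1 + 'X + 'X ^+ j.+1 * q).
  have [p [q expp]] := approx m.-1; exists p.
  by rewrite expp prednK // !rmorphD rmorphM rmorphXn /= horner_morphX xm mul0r addr0 rmorph1.
elim: j => [|j [p [q expp]]].
  by exists 0, (-1); rewrite mul0r rmorph0 truncexp0 // expr1 mulrN1 addrK rmorph1.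
pose u : {poly rat} := - 'X ^+ j * q * 'X.
pose tail := \sum_(i < N) (i.+2`!%:R^-1)%:P * u ^+ i.
exists (p - 'X ^+ j * q).
exists (- q - 'X ^+ j * q ^+ 2 + 'X ^+ j * q ^+ 2 * tail * (1 + 'X + 'X ^+ j.+1 * q)).
have -> : (p - 'X ^+ j * q) * 'X = p * 'X + u by rewrite /u; ring.
rewrite rmorphD (truncexpD f_central (p := m)) ?xXm //; last exact: horner_central_comm.
rewrite expp -(truncexp_rmorph (g := hc x) (f := polyC)) => [|c]; last exact: horner_morphC.
rewrite -rmorphM (truncexpSS polyC_central) -/tail /u !exprS; congr (hc x _); ring.
Qed.

Lemma truncexp_rat_free r (z g : 'I_r -> R) m P N :
  (forall i j, GRing.comm (z i) (z j)) -> (forall i, z i ^+ m = 0) ->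
  (r * m < P)%N -> (P + P <= N)%N -> (forall i, truncexp f N (z i) = g i) ->
  (forall a b : 'I_r -> nat,
     \prod_i g i ^+ a i = \prod_i g i ^+ b i -> forall i, a i = b i) ->
  rat_free f z.
Proof.
move=> cz zm lt_rm_P le_2P_N expz gfree c sum0.
have [L L_neq0 [a [b cL]]] := rat_common_denom c.
have sum_ab : \sum_i z i *+ a i = \sum_i z i *+ b i.
  apply/eqP; rewrite -subr_eq0 -sumrB; apply/eqP.
  transitivity (f L * \sum_i f (c i) * z i); last by rewrite sum0 mulr0.
  rewrite mulr_sumr; apply: eq_bigr => i _.
  by rewrite mulrA -rmorphM mulrC cL rmorphB !rmorph_nat mulrBl !mulr_natl.
have lt_sm_P : (size (index_enum 'I_r) * m < P)%N by rewrite size_index_enum_ord.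
have exp_sum e : truncexp f N (\sum_i z i *+ e i) = \prod_i g i ^+ e i.
  rewrite (truncexp_sum f_central e cz zm lt_sm_P le_2P_N).
  by apply: eq_bigr => i _; rewrite expz.
have := congr1 (truncexp f N) sum_ab; rewrite !exp_sum => /gfree eq_ab i.
have := cL i; rewrite eq_ab subrr => /eqP.
by rewrite mulf_eq0 (negbTE L_neq0) orbF => /eqP.
Qed.

Lemma unipotent_logs r (g : 'I_r -> R) :
  (forall i j, GRing.comm (g i) (g j)) -> (forall i, exists m, (g i - 1) ^+ m = 0) ->
  (forall a b : 'I_r -> nat,
     \prod_i g i ^+ a i = \prod_i g i ^+ b i -> forall i, a i = b i) ->
  exists z : 'I_r -> R, exists m,
    [/\ forall i j, GRing.comm (z i) (z j), forall i, z i ^+ m = 0,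
        forall i, exists u, z i = u * (g i - 1) & rat_free f z].
Proof.
move=> cg unip gfree; have [mi mi_nil] := fin_all_exists unip.
pose M := (\max_i mi i).+1; pose P := (r.+1 * M)%N; pose N := (P + P)%N.
have eta_nil i : (g i - 1) ^+ M = 0.
  by apply: expr_eq0_le (mi_nil i) _; apply/leqW/leq_bigmax.
have le_2M_N : (M + M <= N)%N by rewrite /N /P mulSn; lia.
have [p expp] :=
  fin_all_exists (fun i => truncexp_onto_unipotent (eta_nil i) (ltn0Sn _) le_2M_N).
have ceta i j : GRing.comm (g i - 1) (g j - 1).
  apply: commrB; last exact: commr1.
  by apply: commr_sym; apply: commrB; [apply: commr_sym | exact: commr1].
pose z i := hc (g i - 1) (p i * 'X).
have cz i j : GRing.comm (z i) (z j).
  by apply: horner_central_commr; apply: commr_sym; apply: horner_central_commr.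
have z_nil i : z i ^+ M = 0 by apply: horner_centralXr_eq0.
exists z, M; split=> // [i|].
  by exists (hc (g i - 1) (p i)); apply: horner_centralXr.
apply: (truncexp_rat_free (g := g) cz z_nil (P := P) (N := N)) => // [|i].
  by rewrite /P mulSn; lia.
by rewrite /z expp addrC subrK.
Qed.

Lemma rat_free_cons_nonnilpotent r (z : 'I_r -> R) m y :
  (forall i j, GRing.comm (z i) (z j)) -> (forall i, z i ^+ m = 0) ->
  (forall K, y ^+ K != 0) -> rat_free f z ->
  rat_free f (fun i : 'I_r.+1 => if unlift ord0 i is Some j then z j else y).
Proof.
move=> cz zm y_nnil zfree c; rewrite big_ord_recl unlift_none.
under eq_bigr do rewrite liftK.
move=> sum0; have c0 : c ord0 = 0.
  apply/eqP; apply: contraT => c0_neq0.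
  have : (f (- c ord0) * y) ^+ (r * m).+1 = 0.
    have -> : f (- c ord0) * y = \sum_j f (c (lift ord0 j)) * z j.
      by rewrite rmorphN mulNr; apply/eqP; rewrite eq_sym -subr_eq0 opprK addrC sum0.
    apply: expr_sum_ord_eq0_comm => [i j|i].
      apply: commrM; first exact/commr_sym/f_central.
      by apply/commr_sym/commrM; [exact/commr_sym/f_central | exact: cz].
    by rewrite exprMn_comm ?zm ?mulr0.
  rewrite exprMn_comm // -rmorphXn.
  move=> /(congr1 (fun t => f ((- c ord0) ^+ (r * m).+1)^-1 * t)).
  rewrite mulr0 mulrA -rmorphM mulVf ?expf_neq0 ?oppr_eq0 // rmorph1 mul1r.
  by move/eqP; rewrite (negbTE (y_nnil _)).
move: sum0; rewrite c0 rmorph0 mul0r add0r => /zfree c_lift i.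
by case: (unliftP ord0 i) => [j ->|->].
Qed.

End UnipotentLog.

Section LeftInverse.
Variable R : unitRingType.
Hypothesis R_division : forall x : R, x != 0 -> x \is a GRing.unit.

Lemma cV_left_inverse n (b : 'cV[R]_n) : b != 0 -> exists rho : 'rV_n, rho *m b = 1%:M.
Proof.
case/matrix0Pn => i [j b_ij]; rewrite (ord1 j) in b_ij.
exists (\row_l (if l == i then (b i 0)^-1 else 0)).
apply/matrixP => x y; rewrite (ord1 x) (ord1 y) !mxE (bigD1 i) //=.
rewrite big1 => [|l /negbTE l_neq_i].
  by rewrite !mxE eqxx mulVr ?addr0 ?R_division.
by rewrite !mxE l_neq_i mul0r.
Qed.

Lemma mx_left_inverse n k (B : 'M[R]_(n, k)) :
  (forall c : 'cV_k, B *m c = 0 -> c = 0) -> exists C : 'M_(k, n), C *m B = 1%:M.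
Proof.
elim: k B => [|k IH] B B_inj; first by exists 0; rewrite [LHS]flatmx0 [RHS]flatmx0.
have [b [B' eB]] : exists b B', B = row_mx b B' :> 'M_(n, 1 + k).
  by exists (lsubmx (B : 'M_(n, 1 + k))), (rsubmx (B : 'M_(n, 1 + k))); rewrite hsubmxK.
rewrite {}eB in B_inj *.
have b_neq0 : b != 0.
  apply: contraTneq isT => b0; have /B_inj : row_mx b B' *m col_mx 1%:M 0 = 0.
    by rewrite mul_row_col b0 mul0mx mulmx0 addr0.
  move/(congr1 (@usubmx _ 1 k 1)); rewrite col_mxKu linear0 => /matrixP/(_ 0 0).
  by rewrite !mxE eqxx => /eqP; rewrite oner_eq0.
have [rho rho_b] := cV_left_inverse b_neq0.
pose P := 1%:M - b *m rho.
have P_b : P *m b = 0 by rewrite mulmxBl mul1mx -mulmxA rho_b mulmx1 subrr.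
have [C2 C2_PB'] : exists C2 : 'M_(k, n), C2 *m (P *m B') = 1%:M.
  apply: IH => c PB'c; have /B_inj : row_mx b B' *m col_mx (- (rho *m B' *m c)) c = 0.
    rewrite mul_row_col mulmxN !mulmxA addrC -mulmxBl -{1}[B']mul1mx -mulmxBl.
    by rewrite -mulmxA mulmxA.
  by move/(congr1 (@dsubmx _ 1 k 1)); rewrite col_mxKd linear0.
pose C' := C2 *m P; pose rho' := rho *m (1%:M - B' *m C').
have C'_b : C' *m b = 0 by rewrite -mulmxA P_b mulmx0.
have C'_B' : C' *m B' = 1%:M by rewrite -mulmxA.
exists (col_mx rho' C').
change (col_mx rho' C' *m row_mx b B' = 1%:M :> 'M_(1 + k)).
rewrite mul_col_row C'_b C'_B'.
rewrite -mulmxA mulmxBl mul1mx -mulmxA C'_b mulmx0 subr0 rho_b.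
rewrite -mulmxA mulmxBl mul1mx -mulmxA C'_B' mulmx1 subrr mulmx0.
by rewrite (scalar_mx_block 1 k) block_mxEh.
Qed.

End LeftInverse.

Lemma mulmx_cols_eq0 (R : pzSemiRingType) m n p (X : 'M[R]_(m, n)) (B : 'M_(n, p)) :
  (forall j, X *m col j B = 0) -> X *m B = 0.
Proof.
move=> XB0; apply/matrixP => i j; have /colP/(_ i) := XB0 j.
by rewrite !mxE; apply: etrans; apply: eq_bigr => l _; rewrite mxE.
Qed.

Section RatFreeMatrices.
Variable D : falgType rat.

Definition mx_rat n : {rmorphism rat -> 'M[D]_n} := scalar_mx \o in_alg D.

Lemma mx_ratE n c (X : 'M[D]_n) : mx_rat n c * X = c%:A *: X.
Proof. by rewrite -mulmxE mul_scalar_mx. Qed.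

Lemma mx_rat_central n c (X : 'M[D]_n) : GRing.comm (mx_rat n c) X.
Proof.
rewrite /GRing.comm mx_ratE -mulmxE; apply/matrixP => i j.
rewrite !mxE (bigD1 j) //= big1 => [|l /negbTE l_neq_j]; last by rewrite !mxE l_neq_j mulr0.
by rewrite !mxE eqxx mulr1n addr0 mulr_algl mulr_algr.
Qed.

Definition mx_ffun m n (X : 'M[D]_(m, n)) : {ffun 'I_m * 'I_n -> D} :=
  [ffun ij => X ij.1 ij.2].
Definition ffun_mx m n (v : {ffun 'I_m * 'I_n -> D}) : 'M[D]_(m, n) :=
  \matrix_(i, j) v (i, j).

Lemma mx_ffunK m n : cancel (@mx_ffun m n) (@ffun_mx m n).
Proof. by move=> X; apply/matrixP => i j; rewrite !mxE ffunE. Qed.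

Lemma ffun_mxK m n : cancel (@ffun_mx m n) (@mx_ffun m n).
Proof. by move=> v; apply/ffunP => -[i j]; rewrite !ffunE mxE. Qed.

Lemma mx_ffun0 m n : mx_ffun (0 : 'M[D]_(m, n)) = 0.
Proof. by apply/ffunP => ij; rewrite !ffunE mxE. Qed.

Lemma mx_ffun_rat_comb n s (c : 'I_s -> rat) (w : 'I_s -> 'M[D]_n) :
  mx_ffun (\sum_i mx_rat n (c i) * w i) = \sum_i c i *: mx_ffun (w i).
Proof.
apply/ffunP => ij; rewrite sum_ffunE !ffunE summxE; apply: eq_bigr => i _.
by rewrite mx_ratE !ffunE mxE mulr_algl.
Qed.

Lemma dim_mx_ffun m n : dim {ffun 'I_m * 'I_n -> D} = (m * n * dimQ D)%N.
Proof. by rewrite /dimQ dimvf /dim /= card_prod !card_ord. Qed.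

Lemma rat_free_annihilator_card n k (B : 'M[D]_(n, k)) (C : 'M[D]_(k, n))
    s (w : 'I_s -> 'M[D]_n) :
  C *m B = 1%:M -> (forall i, w i *m B = 0) -> rat_free (mx_rat n) w ->
  (s <= n * (n - k) * dimQ D)%N.
Proof.
move=> CB wB wfree; pose T := [tuple mx_ffun (w i) | i < s].
have freeT : free T.
  apply/freeP => c sum0; apply: wfree; apply: (can_inj (@mx_ffunK _ _)).
  rewrite mx_ffun_rat_comb mx_ffun0 -[RHS]sum0; apply: eq_bigr => i _.
  by rewrite -(tnth_nth 0) tnth_mktuple.
pose annB (v : {ffun 'I_n * 'I_n -> D}) := mx_ffun (ffun_mx v *m B).
have annB_linear : linear annB.
  move=> a u v; apply/ffunP => -[i j]; rewrite !ffunE !mxE scaler_sumr -big_split.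
  by apply: eq_bigr => l _; rewrite !mxE !ffunE mulrDl scalerAl.
pose h := linfun (HB.pack annB (GRing.isLinear.Build _ _ _ _ annB annB_linear)
                   : {linear _ -> _}).
have hE v : h v = annB v by rewrite lfunE.
have h_onto : (h @: fullv = fullv)%VS.
  apply/eqP; rewrite eqEsubv subvf; apply/subvP => v _; apply/memv_imgP.
  exists (mx_ffun (ffun_mx v *m C)); first exact: memvf.
  by rewrite hE /annB mx_ffunK -mulmxA CB mulmx1 ffun_mxK.
have T_ker : (<<T>> <= fullv :&: lker h)%VS.
  rewrite subv_cap subvf; apply/span_subvP => _ /tnthP [i ->].
  by rewrite memv_ker hE tnth_map /annB mx_ffunK wB mx_ffun0.
have := limg_ker_dim h fullv; rewrite h_onto !dimvf !dim_mx_ffun.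
have := dimvS T_ker; rewrite (eqP freeT) size_tuple mulnBr mulnBl; nia.
Qed.

End RatFreeMatrices.

Unset Implicit Arguments.

Theorem lemma5p26 (D : falgType rat) (hD : is_division_algebra D)
  (n : nat) (hn : (0 < n)%N) (S : 'M[D]_n -> Prop)
  (hS : is_subgroup_GL S) (hab : is_abelian S) (hfg : fin_generated S)
  (hnt : exists2 a, S a & a <> 1) (hunip : forall a, S a -> unipotent a)
  (k r : nat) (hk : rdimD_eq S k) (hr : rkZ_eq S r) :
  (r < n * (n - k) * dimQ D)%N.
Proof.
case: n hn S hS hab hfg hnt hunip hk hr => // n _ S _ hab _ [a Sa a_neq1] hunip hk hr.
have [[g [Sg gfree]] _] := hr.
have [B [B_kfrak B_inj _]] := hk.
have [C CB] := mx_left_inverse hD B_inj.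
have kfrakB x : S x -> (x - 1) *m B = 0.
  by move=> Sx; apply: mulmx_cols_eq0 => j; apply: B_kfrak.
have [z [m [cz z_nil zB zfree]]] := unipotent_logs (@mx_rat_central D n.+1)
  (fun i j => hab _ _ (Sg i) (Sg j)) (fun i => hunip _ (Sg i)) gfree.
pose Y : 'M[D]_n.+1 := 1%:M - B *m C.
have YB : Y *m B = 0 by rewrite mulmxBl mul1mx -mulmxA CB mulmx1 subrr.
have Y_idem : Y * Y = Y by rewrite -mulmxE {2}/Y mulmxBr mulmx1 mulmxA YB mul0mx subr0.
have Y_neq0 : Y != 0.
  apply: contra_not_neq a_neq1 => /subr0_eq BC1; apply/subr0_eq.
  by rewrite -[a - 1]mulmx1 BC1 mulmxA kfrakB // mul0mx.
pose w (i : 'I_r.+1) := if unlift ord0 i is Some j then z j else Y.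
apply: (rat_free_annihilator_card CB (w := w)).
  move=> i; rewrite /w; case: (unlift ord0 i) => [j|] //; have [u ->] := zB j.
  by rewrite -mulmxE -mulmxA kfrakB ?mulmx0.
apply: (rat_free_cons_nonnilpotent (@mx_rat_central D n.+1) cz z_nil _ zfree) => K.
exact: idempotent_expr_neq0.
Qed.
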